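(* Let $\overline X$ be a compact Hausdorff space, and let $\partial_L,\partial_R\subset\overline X$ be disjoint closed subspaces. Write $\partial\overline X:=\partial_L\cup\partial_R$ and $X:=\overline X\setminus\partial\overline X$. Then the two pointed extensions of $X$ \[ X_\ast:=\ast\amalg_{\partial_L}(\overline X\setminus\partial_R)\qquad\text{and}\qquad \ast\amalg_{\partial_R}(\overline X\setminus\partial_L) \] are both well-pointed, and each is the negation of the other.
   Context: A pointed extension of a locally compact Hausdorff space $X$ is a compactly generated Hausdorff topology on $\ast\amalg X$ extending that of $X$; they form a poset with $X_\ast\le X'_\ast$ iff the identity map is continuous, with initial object $X_+$ and final object $X^+$ (one-point compactification). The negation $X_\ast^\neg$ is the final pointed extension $X'_\ast$ for which the natural map $X_+\to X_\ast\times_{X^+}X'_\ast$ is a homeomorphism. $X_\ast$ is well-pointed if the canonical relation $X_\ast\to X_\ast^{\neg\neg}$ is a homeomorphism. Here $\ast\amalg_{\partial_L}(\overline X\setminus\partial_R)$ denotes the quotient collapsing $\partial_L$ to the point $\ast$. *)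

(* Topologies on the carrier [option Xt]
   (None = the base point) are handled explicitly as families of open sets,
   since we must compare several topologies on the same carrier. *)
From HB Require Import structures.
From mathcomp Require Import all_boot all_order.
From mathcomp Require Import all_classical.
From mathcomp Require Import topology.

Unset Printing Implicit Defensive.

Local Open Scope classical_set_scope.

Definition is_topology {C : Type} (tau : set (set C)) : Prop :=
  [/\ tau setT,
      (forall A B, tau A -> tau B -> tau (A `&` B)) &
      (forall G : set (set C), G `<=` tau -> tau (\bigcup_(A in G) A))].

Definition hausdorff_top {C : Type} (tau : set (set C)) : Prop :=
  forall x y : C, x <> y ->
    exists U V, [/\ tau U, tau V, U x, V y & U `&` V = set0].

Definition compact_in {C : Type} (tau : set (set C)) (K : set C) : Prop :=
  forall G : set (set C), G `<=` tau -> K `<=` \bigcup_(A in G) A ->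
    exists F : set (set C), [/\ finite_set F, F `<=` G &
                               K `<=` \bigcup_(A in F) A].

Definition kify {C : Type} (tau : set (set C)) : set (set C) :=
  [set A | forall K, compact_in tau K ->
     exists U, tau U /\ A `&` K = U `&` K].

Definition compactly_generated {C : Type} (tau : set (set C)) : Prop :=
  kify tau `<=` tau.

Definition prod_top {C1 C2 : Type} (t1 : set (set C1)) (t2 : set (set C2)) :
  set (set (C1 * C2)) :=
  [set W | forall p, W p ->
     exists U V, [/\ t1 U, t2 V, U p.1, V p.2 & U `*` V `<=` W]].

Definition pts {T : Type} (X : set T) := {x : T | X x}.

Definition subspace_top {T : topologicalType} (X : set T) : set (set (pts X)) :=
  [set A | exists V : set T, open V /\ A = (@proj1_sig T X) @^-1` V].

(* pointed extensions of X: compactly generated Hausdorff topologies on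
   base-point \amalg X (= option (pts X)) whose subspace topology on X is that of X *)
Definition pointed_ext {T : topologicalType} (X : set T)
  (tau : set (set (option (pts X)))) : Prop :=
  [/\ is_topology tau, hausdorff_top tau, compactly_generated tau &
      forall A : set (pts X),
        subspace_top X A <-> exists U, tau U /\ A = Some @^-1` U].

(* X_+ : the base point is isolated *)
Definition plus_top {T : topologicalType} (X : set T) :
  set (set (option (pts X))) :=
  [set U | subspace_top X (Some @^-1` U)].

(* X_* <= X'_* iff the identity X_* -> X'_* is continuous *)
Definition pext_le {C : Type} (tau tau' : set (set C)) : Prop := tau' `<=` tau.

(* Both structure maps to X^+ are the
   identity on the underlying set, so as a set the fiber product is the
   diagonal {(p,p)}; we identify it with * \amalg X via p |-> (p,p). *)
Definition fiber_prod_top {C : Type} (tau tau' : set (set C)) : set (set C) :=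
  kify [set A | exists W, prod_top tau tau' W /\ A = [set p | W (p, p)]].

Definition is_negation {T : topologicalType} (X : set T)
  (tau tau' : set (set (option (pts X)))) : Prop :=
  [/\ pointed_ext X tau',
      fiber_prod_top tau tau' = plus_top X &
      forall tau'', pointed_ext X tau'' ->
        fiber_prod_top tau tau'' = plus_top X -> pext_le tau'' tau'].

(* well-pointed: the canonical map X_* -> X_*^{negneg} (identity on points)
   is a homeomorphism *)
Definition well_pointed {T : topologicalType} (X : set T)
  (tau : set (set (option (pts X)))) : Prop :=
  exists tau1 tau2, [/\ is_negation X tau tau1, is_negation X tau1 tau2 & tau2 = tau].

(* base-point \amalg_{A} (Tbar \ B): the subspace Y := Tbar \ B, with the closed set A
   collapsed to the base point.  Here X = Tbar \ (A u B) (with A, B disjoint),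
   and a point y of Y goes to None if y \in A, to Some y if y \in X.
   Quotient topology: U is open iff its preimage in Y is open in Y. *)
Definition collapse_top {T : topologicalType} (X : set T) (A B : set T) :
  set (set (option (pts X))) :=
  [set U | exists V : set T, open V /\
     forall y : T, ~ B y ->
       (V y <-> (A y /\ U None) \/ exists h : X y, U (Some (exist _ y h)))].

(* Neighbourhoods of the base point of X_L := * \amalg_{dL} (Xbar \ dR) are
   the neighbourhoods of dL, those of X_R the neighbourhoods of dR.  Disjoint
   compacta have disjoint neighbourhoods, so the base point is isolated in
   X_L x_{X^+} X_R; and X is open in Xbar, hence locally compact, so the
   k-ification does not change the topology on X: the fiber product is X_+.
   For maximality let X' be a pointed extension with X_L x_{X^+} X' = X_+
   and U a neighbourhood of the base point in X_R, i.e. of dR.  Outside a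
   neighbourhood V of dR every open set of X_L agrees with an open set of X'
   (the points where they could differ form a compact subset of X, which X'
   separates from the base point), so for K compact in X' the set K \ U is
   compact in the fiber product, where the base point is isolated.  Hence U
   meets every compact K of X' in a relatively open set, so U is open in the
   compactly generated X'.
   By symmetry X_L and X_R are each other's negation, hence well-pointed. *)

From HB Require Import structures.
From mathcomp Require Import all_boot all_order all_classical finmap topology.
Local Open Scope classical_set_scope.

Section ExplicitTopology.
Context {C : Type} {tau : set (set C)}.
Hypothesis tau_top : is_topology tau.

Lemma topT : tau setT.
Proof. by case: tau_top. Qed.

Lemma topI A B : tau A -> tau B -> tau (A `&` B).
Proof. by case: tau_top => _ + _; apply. Qed.

Lemma top_bigcup (G : set (set C)) : G `<=` tau -> tau (\bigcup_(A in G) A).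
Proof. by case: tau_top => _ _; apply. Qed.

Lemma topU A B : tau A -> tau B -> tau (A `|` B).
Proof.
move=> tA tB; have -> : A `|` B = \bigcup_(S in [set A; B]) S.
  apply/seteqP; split=> [x [xA|xB]|x [S [->|->] Sx]]; [by exists A; [left|]|
    by exists B; [right|]|by left|by right].
by apply: top_bigcup => S [->|->].
Qed.

Lemma top_local A : (forall x, A x -> exists U, [/\ tau U, U x & U `<=` A]) ->
  tau A.
Proof.
move=> Aloc; have -> : A = \bigcup_(U in [set U | tau U /\ U `<=` A]) U.
  apply/seteqP; split=> [x Ax|x [U [_ UA] Ux]]; last exact: UA.
  by have [U [tU Ux UA]] := Aloc x Ax; exists U.
by apply: top_bigcup => U [].
Qed.

Lemma top_bigcap_seq (I : eqType) (s : seq I) (f : I -> set C) :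
  (forall i, i \in s -> tau (f i)) -> tau (\bigcap_(i in [set` s]) f i).
Proof.
elim: s => [|a s IHs] tf.
  by rewrite set_nil bigcap_set0; exact: topT.
have -> : [set` a :: s] = a |` [set` s].
  apply/seteqP; split=> i /=; rewrite inE; first by move=> /orP[/eqP|]; auto.
  by move=> [->|si]; rewrite ?eqxx ?si ?orbT.
rewrite bigcap_setU1; apply: topI; first by apply: tf; rewrite inE eqxx.
by apply: IHs => i si; apply: tf; rewrite inE si orbT.
Qed.

Lemma top_bigcap_finite (I : choiceType) (D : set I) (f : I -> set C) :
  finite_set D -> (forall i, D i -> tau (f i)) -> tau (\bigcap_(i in D) f i).
Proof. by move=> /finite_seqP [s ->] tf; apply: top_bigcap_seq. Qed.

Lemma separate_compact_in (S K : set C) : compact_in tau K ->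
  (forall x, K x -> exists U V,
     [/\ tau U, tau V, S `<=` U, V x & U `&` V = set0]) ->
  exists U V, [/\ tau U, tau V, S `<=` U, K `<=` V & U `&` V = set0].
Proof.
move=> cK sepK.
pose H := [set V | tau V /\ exists U, [/\ tau U, S `<=` U & U `&` V = set0]].
have [F [finF FH KF]] : exists F, [/\ finite_set F, F `<=` H &
    K `<=` \bigcup_(A in F) A].
  apply: cK => [V []//|x Kx].
  have [U [V [tU tV SU Vx UV]]] := sepK x Kx.
  by exists V => //; split=> //; exists U.
have /choice [g gP] : forall V : set C, exists U : set C, H V ->
    [/\ tau U, S `<=` U & U `&` V = set0].
  move=> V; have [[_ [U UP]]|nHV] := pselect (H V); first by exists U.
  by exists set0.
exists (\bigcap_(V in F) g V), (\bigcup_(V in F) V); split => //.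
- by apply: top_bigcap_finite => // V FV; have [] := gP V (FH V FV).
- by apply: top_bigcup => V FV; have [] := FH V FV.
- by move=> x Sx V FV; have [_ + _] := gP V (FH V FV); apply.
- apply/disjoints_subset => x gx [V FV Vx].
  have [_ _ /disjoints_subset gV] := gP V (FH V FV).
  exact: gV (gx V FV) Vx.
Qed.

Lemma compact_inD K W : compact_in tau K -> tau W -> compact_in tau (K `\` W).
Proof.
move=> cK tW G Gt KG.
have [|x Kx|F [finF FWG KF]] := cK (W |` G).
- by move=> A [->|/Gt].
- have [Wx|nWx] := pselect (W x); first by exists W => //; left.
  by have [A GA Ax] := KG x (conj Kx nWx); exists A => //; right.
exists (F `\ W); split; first exact: finite_setD.
  by move=> A [/FWG [//|]].
move=> x [Kx nWx]; have [A FA Ax] := KF x Kx.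
by exists A => //; split=> // AW; apply: nWx; rewrite -AW.
Qed.

Lemma compact_inU K1 K2 : compact_in tau K1 -> compact_in tau K2 ->
  compact_in tau (K1 `|` K2).
Proof.
move=> cK1 cK2 G Gt KG.
have [F1 [fin1 F1G K1F]] := cK1 G Gt (fun x K1x => KG x (or_introl K1x)).
have [F2 [fin2 F2G K2F]] := cK2 G Gt (fun x K2x => KG x (or_intror K2x)).
exists (F1 `|` F2); split; first by rewrite finite_setU.
  by move=> A [/F1G|/F2G].
by move=> x [/K1F|/K2F] [A FA Ax]; exists A => //; [left|right].
Qed.

Lemma compact_in_set1 p : compact_in tau [set p].
Proof.
move=> G _ pG; have [A GA Ap] := pG p erefl.
exists [set A]; split; first exact: finite_set1.
  by move=> B ->.
by move=> x ->; exists A.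
Qed.

Lemma locally_compact_cg :
  (forall p, exists O K, [/\ tau O, O p, O `<=` K & compact_in tau K]) ->
  compactly_generated tau.
Proof.
move=> lc A kA; apply: top_local => p Ap.
have [O [K [tO Op OK cK]]] := lc p.
have [U [tU AKU]] := kA K cK.
have UK x : O x -> (A x <-> U x).
  move=> Ox; have Kx := OK x Ox; split=> [Ax|Ux].
    by have [] : (U `&` K) x by rewrite -AKU.
  by have [] : (A `&` K) x by rewrite AKU.
exists (O `&` U); split; [exact: topI|by split=> //; apply/UK|].
by move=> x [Ox Ux]; apply/UK.
Qed.

Section Hausdorff.
Hypothesis tau_haus : hausdorff_top tau.

Lemma separate_point_compact {p K} : compact_in tau K -> ~ K p ->
  exists U V, [/\ tau U, tau V, U p, K `<=` V & U `&` V = set0].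
Proof.
move=> cK nKp.
have [|U [V [tU tV pU KV UV]]] := @separate_compact_in [set p] K cK.
  move=> x Kx; have [|U [V [tU tV Up Vx UV]]] := tau_haus p x.
    by move=> px; apply: nKp; rewrite px.
  by exists U, V; split=> // _ ->.
by exists U, V; split=> //; apply: pU.
Qed.

Lemma separate_compacts {K1 K2} : compact_in tau K1 -> compact_in tau K2 ->
  K1 `&` K2 = set0 ->
  exists U V, [/\ tau U, tau V, K1 `<=` U, K2 `<=` V & U `&` V = set0].
Proof.
move=> cK1 cK2 /disjoints_subset K12.
have [|V [U [tV tU K2V K1U VU]]] := @separate_compact_in K2 K1 cK1.
  move=> x /K12 nK2x.
  have [U [V [tU tV Ux K2V UV]]] := separate_point_compact cK2 nK2x.
  by exists V, U; split=> //; rewrite setIC.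
by exists U, V; split=> //; rewrite setIC.
Qed.

End Hausdorff.
End ExplicitTopology.

Lemma compact_in_image (C1 C2 : Type) (tau1 : set (set C1))
  (tau2 : set (set C2)) (f : C1 -> C2) (Z : set C1) : compact_in tau1 Z ->
  (forall U, tau2 U ->
     exists V, tau1 V /\ forall x, Z x -> (V x <-> U (f x))) ->
  compact_in tau2 (f @` Z).
Proof.
move=> cZ fcont G Gt fZG.
have /choice [pre preP] : forall U, exists V, tau2 U ->
    tau1 V /\ forall x, Z x -> (V x <-> U (f x)).
  move=> U; have [/fcont [V VP]|nU] := pselect (tau2 U); first by exists V.
  by exists set0.
have [|x Zx|F [finF FG ZF]] := cZ (pre @` G).
- by move=> _ [U GU <-]; have [] := preP U (Gt U GU).
- have [U GU Ufx] := fZG (f x) (imageP f Zx).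
  by exists (pre U); [exists U|apply/(preP U (Gt U GU)).2].
have /choice [g gP] : forall V, exists U, (pre @` G) V -> G U /\ pre U = V.
  move=> V; have [[U GU <-]|nV] := pselect ((pre @` G) V); first by exists U.
  by exists set0.
exists (g @` F); split; first exact: finite_image.
  by move=> _ [V FV <-]; have [] := gP V (FG V FV).
move=> _ [x Zx <-]; have [V FV Vx] := ZF x Zx.
have [GgV preg] := gP V (FG V FV).
exists (g V); first by exists V.
by apply/(preP _ (Gt _ GgV)).2; rewrite ?preg.
Qed.

Lemma compact_in_trace_coarser (C : Type) (tau J : set (set C)) K :
  compact_in tau K ->
  (forall S p, J S -> S p -> K p ->
     exists U, [/\ tau U, U p & U `&` K `<=` S]) ->
  compact_in J K.
Proof.
move=> cK refine G GJ KG.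
pose H := [set U | tau U /\ exists2 S, G S & U `&` K `<=` S].
have [|p Kp|F [finF FH KF]] := cK H.
- by move=> U [].
- have [S GS Sp] := KG p Kp; have [U [tU Up UKS]] := refine S p (GJ S GS) Sp Kp.
  by exists U => //; split=> //; exists S.
have /choice [g gP] : forall U, exists S, H U -> G S /\ U `&` K `<=` S.
  move=> U; have [[_ [S GS US]]|nHU] := pselect (H U); first by exists S.
  by exists set0.
exists (g @` F); split; first exact: finite_image.
  by move=> _ [U FU <-]; have [] := gP U (FH U FU).
move=> p Kp; have [U FU Up] := KF p Kp.
by exists (g U); [exists U|have [_] := gP U (FH U FU); apply].
Qed.

(* [compact_cover] is stated for pointed spaces; a nonempty compact set
   provides the point. *)
Definition pointed_at {T : topologicalType} (t0 : T) : Type := T.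
HB.instance Definition _ (T : topologicalType) (t0 : T) :=
  Topological.on (pointed_at t0).
HB.instance Definition _ (T : topologicalType) (t0 : T) :=
  isPointed.Build (pointed_at t0) t0.

Section OpenSets.
Context {T : topologicalType}.

Lemma open_is_topology : is_topology (@open T).
Proof.
split; [exact: openT|by move=> A B; apply: openI|].
by move=> G GO; apply: bigcup_open => i /GO.
Qed.

Lemma hausdorff_open : hausdorff_space T -> hausdorff_top (@open T).
Proof.
rewrite open_hausdorff => hT x y /eqP xy.
have [[U V] /= [/set_mem xU /set_mem yV] [oU oV /eqP UV]] := hT x y xy.
by exists U, V.
Qed.

Lemma compact_in_open (Z : set T) : compact Z -> compact_in (@open T) Z.
Proof.
move=> cZ G GO ZG; have [->|/set0P [t0 _]] := eqVneq Z set0.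
  by exists set0; split.
have : @cover_compact (pointed_at t0) Z by rewrite -compact_cover.
move=> /(_ _ G id GO ZG) [D DG ZD].
by exists [set` D]; split=> [|S /DG/set_mem|]; first exact: finite_fset.
Qed.

Lemma closed_compact_in_open (Z : set T) : compact [set: T] -> closed Z ->
  compact_in (@open T) Z.
Proof. by move=> cT cZ; apply/compact_in_open/(subclosed_compact cZ cT). Qed.

End OpenSets.

(* For X = ~` (A `|` B) this is the quotient map T \ B -> collapse_top X A B;
   the points of B, outside its domain, are also sent to the base point. *)
Definition to_pointed {T : Type} (X : set T) (y : T) : option (pts X) :=
  if pselect (X y) is left Xy then Some (exist _ y Xy) else None.

Definition some_set {T : Type} (X : set T) (V : set T) : set (option (pts X)) :=
  [set p | if p is Some x then V (sval x) else False].

Definition base_set {T : Type} (X : set T) (V : set T) : set (option (pts X)) :=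
  [set p | if p is Some x then V (sval x) else True].

Section Points.
Context {T : Type} {X : set T}.

Lemma pts_inj : injective (@proj1_sig T X).
Proof.
by move=> [a Xa] [b Xb] /= ab; subst b; rewrite (Prop_irrelevance Xa Xb).
Qed.

Lemma to_pointed_val (x : pts X) : to_pointed X (sval x) = Some x.
Proof.
rewrite /to_pointed; case: pselect => [Xx|/(_ (proj2_sig x))//].
by congr Some; apply: pts_inj.
Qed.

Lemma to_pointed_notin y : ~ X y -> to_pointed X y = None.
Proof. by rewrite /to_pointed; case: pselect. Qed.

Lemma some_set_to_pointed V y : some_set X V (to_pointed X y) <-> (V `&` X) y.
Proof.
have [Xy|nXy] := pselect (X y); last first.
  by rewrite to_pointed_notin //; split=> -[].
rewrite -[y]/(sval (exist _ y Xy)) to_pointed_val /=.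
by split=> [Vy|[]//]; split.
Qed.

Lemma base_set_to_pointed V y :
  base_set X V (to_pointed X y) <-> (V `|` ~` X) y.
Proof.
have [Xy|nXy] := pselect (X y); last first.
  by rewrite to_pointed_notin //; split=> //; right.
rewrite -[y]/(sval (exist _ y Xy)) to_pointed_val /=.
by split=> [|[]//]; left.
Qed.

Lemma some_set_base_set V : some_set X V `<=` base_set X V.
Proof. by case. Qed.

Lemma some_set_disjoint {U V} : U `&` V = set0 ->
  some_set X U `&` base_set X V = set0.
Proof.
move=> /disjoints_subset UV; apply/disjoints_subset => -[x|] //= Ux.
exact: UV.
Qed.

End Points.

Section Subspace.
Context {T : topologicalType} {X : set T}.

Lemma subspace_top_local (W : set (pts X)) :
  (forall x, W x -> exists O, [/\ open O, O (sval x) &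
     forall z : pts X, O (sval z) -> W z]) -> subspace_top X W.
Proof.
move=> Wloc; pose G := [set O | open O /\ forall z : pts X, O (sval z) -> W z].
exists (\bigcup_(O in G) O); split; first by apply: bigcup_open => O [].
apply/seteqP; split=> [x Wx|x [O [_ OW] Ox]]; last exact: OW.
by have [O [oO Ox OW]] := Wloc x Wx; exists O.
Qed.

Lemma subspace_top_to_pointed {S : set (option (pts X))} :
  subspace_top X (Some @^-1` S) ->
  exists V, open V /\ forall y, X y -> (V y <-> S (to_pointed X y)).
Proof.
move=> [V [oV SV]]; exists V; split=> // y Xy.
rewrite -[y]/(sval (exist _ y Xy)) to_pointed_val.
by rewrite -[S _]/((Some @^-1` S) _) SV.
Qed.

Lemma compact_in_to_pointed {tau : set (set (option (pts X)))} {Z : set T} :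
  (forall U, tau U -> subspace_top X (Some @^-1` U)) -> Z `<=` X ->
  compact_in (@open T) Z -> compact_in tau (to_pointed X @` Z).
Proof.
move=> tau_sub ZX cZ; apply: compact_in_image cZ _ => U /tau_sub.
move=> /subspace_top_to_pointed [V [oV VU]].
by exists V; split=> // y /ZX; apply: VU.
Qed.

End Subspace.

Section Collapse.
Context {T : topologicalType} {X A B : set T}.
Hypothesis defX : X = ~` (A `|` B).

Local Notation q := (to_pointed X).
Local Notation XA := (collapse_top X A B).

Let memX y : X y <-> ~ A y /\ ~ B y.
Proof. by rewrite defX setCU. Qed.

Lemma collapse_pointP (U : set (option (pts X))) y : ~ B y ->
  ((A y /\ U None) \/ exists Xy : X y, U (Some (exist _ y Xy))) <-> U (q y).
Proof.
move=> nBy; have [Xy|nXy] := pselect (X y).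
  rewrite -[y]/(sval (exist _ y Xy)) to_pointed_val /=.
  split=> [[[Ay _]|[Xy' Uy]]|Uy]; last by right; exists Xy.
    by have [] := (memX y).1 Xy.
  by rewrite (Prop_irrelevance Xy Xy').
have Ay : A y by apply: contrapT => nAy; apply/nXy/memX.
by rewrite to_pointed_notin //; split=> [[[]//|[]]//|UN]; left.
Qed.

Lemma collapse_topP (U : set (option (pts X))) : XA U <->
  exists V, open V /\ forall y, ~ B y -> (V y <-> U (q y)).
Proof.
split=> -[V [oV VU]]; exists V; split=> // y nBy.
  by rewrite -collapse_pointP // VU.
by rewrite collapse_pointP // VU.
Qed.

Hypotheses (cT : compact [set: T]) (hT : hausdorff_space T)
  (clA : closed A) (clB : closed B) (AB : A `&` B = set0).

Lemma openX : open X.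
Proof. by rewrite defX; exact/closed_openC/closedU. Qed.

Lemma collapse_some_set V : open V -> XA (some_set X V).
Proof.
move=> oV; apply/collapse_topP; exists (V `&` X).
split; first exact: openI openX.
by move=> y _; rewrite some_set_to_pointed.
Qed.

Lemma collapse_base_set V : open V -> A `<=` V -> XA (base_set X V).
Proof.
move=> oV AV; apply/collapse_topP; exists V; split=> // y nBy.
rewrite base_set_to_pointed; split=> [|[//|nXy]]; first by left.
by apply: AV; apply: contrapT => nAy; apply/nXy/memX.
Qed.

Lemma collapse_subspace U : XA U -> subspace_top X (Some @^-1` U).
Proof.
move=> /collapse_topP [V [oV VU]]; exists V; split=> //.
have VU' (x : pts X) : V (sval x) <-> U (Some x).
  rewrite -(to_pointed_val x); apply: VU.
  by have [] := (memX _).1 (proj2_sig x).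
by apply/seteqP; split=> x /VU'.
Qed.

Lemma collapse_is_topology : is_topology XA.
Proof.
split.
- by apply/collapse_topP; exists setT; split=> //; exact: openT.
- move=> U1 U2 /collapse_topP [V1 [oV1 VU1]] /collapse_topP [V2 [oV2 VU2]].
  apply/collapse_topP; exists (V1 `&` V2); split; first exact: openI.
  by move=> y nBy; rewrite /= VU1 // VU2.
- move=> G GA; apply/collapse_topP.
  exists (\bigcup_(V in [set V | open V /\ exists2 U, G U &
     forall y, ~ B y -> (V y <-> U (q y))]) V).
  split; first by apply: bigcup_open => V [].
  move=> y nBy; split=> [[V [_ [U GU VU]] Vy]|[U GU Uy]].
    by exists U => //; apply/VU.
  have /collapse_topP [V [oV VU]] := GA U GU.
  by exists V; [split=> //; exists U|apply/VU].
Qed.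

Let Xpt_notA (x : pts X) : ~ A (sval x).
Proof. by have [] := (memX _).1 (proj2_sig x). Qed.

Lemma collapse_hausdorff : hausdorff_top XA.
Proof.
have sepNone x : exists U V,
    [/\ XA U, XA V, U (Some x), V None & U `&` V = set0].
  have [U [V [oU oV Ux AV UV]]] := separate_point_compact open_is_topology
    (hausdorff_open hT) (closed_compact_in_open _ cT clA) (Xpt_notA x).
  exists (some_set X U), (base_set X V); split=> //.
  - exact: collapse_some_set.
  - exact: collapse_base_set.
  - exact: some_set_disjoint.
move=> [a|] [b|] ab; last by [].
- have ab' : sval a <> sval b by move=> /pts_inj eab; apply: ab; rewrite eab.
  have [U [V [oU oV Ua Vb UV]]] := hausdorff_open hT _ _ ab'.
  exists (some_set X U), (some_set X V).
  split=> //; try exact: collapse_some_set.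
  have /disjoints_subset UV' := some_set_disjoint (X := X) UV.
  by apply/disjoints_subset => p /UV' nVp /some_set_base_set.
- exact: sepNone.
- have [U [V [tU tV Ub VN UV]]] := sepNone b.
  by exists V, U; split=> //; rewrite setIC.
Qed.

Lemma collapse_compact_image Z : compact_in (@open T) Z -> Z `&` B = set0 ->
  compact_in XA (q @` Z).
Proof.
move=> cZ /disjoints_subset ZB; apply: compact_in_image cZ _.
move=> U /collapse_topP [V [oV VU]].
by exists V; split=> // y /ZB; apply: VU.
Qed.

Lemma collapse_cg : compactly_generated XA.
Proof.
apply: locally_compact_cg; first exact: collapse_is_topology.
have cC (V : set T) : open V -> compact_in (@open T) (~` V).
  by move=> oV; apply: closed_compact_in_open => //; exact: open_closedC.
move=> [x|].
- have nXx : ~ (~` X) (sval x) by move=> /(_ (proj2_sig x)).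
  have [U [V [oU oV Ux XV /disjoints_subset UV]]] := separate_point_compact
    open_is_topology (hausdorff_open hT) (cC _ openX) nXx.
  exists (some_set X U), (q @` ~` V).
  split=> //; first exact: collapse_some_set.
    by move=> [z|] //= Uz; exists (sval z); [exact: UV|exact: to_pointed_val].
  apply: collapse_compact_image; first exact: cC.
  apply/disjoints_subset => y nVy By; apply: nVy; apply: XV.
  by apply/memX => -[].
- have [U [V [oU oV AU BV /disjoints_subset UV]]] := separate_compacts
    open_is_topology (hausdorff_open hT) (closed_compact_in_open _ cT clA)
    (closed_compact_in_open _ cT clB) AB.
  exists (base_set X U), ((q @` ~` V) `|` [set None]); split=> //.
  + exact: collapse_base_set.
  + move=> [z|] /= Uz; [left|by right].
    by exists (sval z); [exact: UV|exact: to_pointed_val].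
  + apply: compact_inU; last exact: compact_in_set1.
    apply: collapse_compact_image; first exact: cC.
    by apply/disjoints_subset => y nVy /BV.
Qed.

Lemma collapse_pointed_ext : pointed_ext X XA.
Proof.
split.
- exact: collapse_is_topology.
- exact: collapse_hausdorff.
- exact: collapse_cg.
- move=> W; split=> [[V [oV ->]]|[U [XAU ->]]]; last exact: collapse_subspace.
  exists (some_set X V); split; first exact: collapse_some_set.
  by apply/seteqP; split.
Qed.

End Collapse.

Definition diag_top {C : Type} (tau tau' : set (set C)) : set (set C) :=
  [set S | exists W, prod_top tau tau' W /\ S = [set p | W (p, p)]].

Section Diagonal.
Context {C : Type} (tau tau' : set (set C)).

Lemma fiber_prod_topE : fiber_prod_top tau tau' = kify (diag_top tau tau').
Proof. by []. Qed.

Lemma diag_topP S : diag_top tau tau' S <->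
  forall p, S p -> exists U V, [/\ tau U, tau' V, U p, V p & U `&` V `<=` S].
Proof.
split=> [[W [prodW ->]] p /= Wpp|Sloc].
  have [U [V [tU tV Up Vp UVW]]] := prodW (p, p) Wpp.
  by exists U, V; split=> // z [Uz Vz]; exact: UVW.
exists [set pq | exists U V,
  [/\ tau U, tau' V, U pq.1, V pq.2 & U `&` V `<=` S]]; split.
  move=> [a b] [U [V [tU tV Ua Vb UVS]]]; exists U, V; split=> //.
  by move=> [y z] [/= Uy Vz]; exists U, V.
apply/seteqP; split=> [p /Sloc //|p [U [V [_ _ Up Vp UVS]]]].
exact: UVS.
Qed.

End Diagonal.

Lemma sub_kify {C : Type} (tau : set (set C)) : tau `<=` kify tau.
Proof. by move=> A tA K _; exists A. Qed.

Section SubspaceTopologies.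
Context {T : topologicalType} (X : set T).

Lemma diag_top_subspace (tau tau' : set (set (option (pts X)))) :
  (forall U, tau U -> subspace_top X (Some @^-1` U)) ->
  (forall U, tau' U -> subspace_top X (Some @^-1` U)) ->
  forall S, diag_top tau tau' S -> subspace_top X (Some @^-1` S).
Proof.
move=> tau_sub tau'_sub S /diag_topP DS; apply: subspace_top_local => x Sx.
have [U [V [tU tV Ux Vx UVS]]] := DS _ Sx.
have [O1 [oO1 UO1]] := tau_sub U tU; have [O2 [oO2 VO2]] := tau'_sub V tV.
have inU z : U (Some z) <-> O1 (sval z).
  by rewrite -[U _]/((Some @^-1` U) z) UO1.
have inV z : V (Some z) <-> O2 (sval z).
  by rewrite -[V _]/((Some @^-1` V) z) VO2.
exists (O1 `&` O2); split; [exact: openI|by split; [apply/inU|apply/inV]|].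
by move=> z [/inU Uz /inV Vz]; exact: UVS.
Qed.

(* An open subspace of a compact Hausdorff space is locally compact, so
   k-ification does not change the topology induced on it. *)
Lemma kify_subspace (tau : set (set (option (pts X)))) :
  compact [set: T] -> hausdorff_space T -> open X ->
  (forall U, tau U -> subspace_top X (Some @^-1` U)) ->
  forall S, kify tau S -> subspace_top X (Some @^-1` S).
Proof.
move=> cT hT oX tau_sub S kS; apply: subspace_top_local => x Sx.
have nXx : ~ (~` X) (sval x) by move=> /(_ (proj2_sig x)).
have [O [O' [oO oO' Ox XO' /disjoints_subset OO']]] := separate_point_compact
  open_is_topology (hausdorff_open hT)
  (closed_compact_in_open _ cT (open_closedC oX)) nXx.
have O'X : ~` O' `<=` X by move=> y nO'y; apply: contrapT => /XO'.
pose K := to_pointed X @` ~` O'.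
have cK : compact_in tau K.
  apply: compact_in_to_pointed tau_sub O'X _.
  exact: closed_compact_in_open _ cT (open_closedC oO').
have [S' [tS' SKS']] := kS K cK.
have [V [oV VS']] := subspace_top_to_pointed (tau_sub S' tS').
have OK z : O (sval z) -> K (Some z).
  by move=> Oz; exists (sval z); [exact: OO'|exact: to_pointed_val].
have inV z : V (sval z) <-> S' (Some z).
  by rewrite -(to_pointed_val z); apply: VS'; exact: proj2_sig.
exists (O `&` V); split; first exact: openI.
  split=> //; apply/inV.
  by have [] : (S' `&` K) (Some x) by rewrite -SKS'; split=> //; exact: OK.
move=> z [Oz /inV S'z].
by have [] : (S `&` K) (Some z) by rewrite SKS'; split=> //; exact: OK.
Qed.

End SubspaceTopologies.

Section PointedExtension.
Context {T : topologicalType} {X : set T} {tau : set (set (option (pts X)))}.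
Hypothesis tau_ext : pointed_ext X tau.

Lemma pointed_ext_subspace U : tau U -> subspace_top X (Some @^-1` U).
Proof. by case: tau_ext => _ _ _ sub tU; apply/sub; exists U. Qed.

Lemma pointed_ext_Some : tau [set p | p <> None].
Proof.
case: tau_ext => tau_top tau_haus _ _.
apply: (top_local tau_top) => -[x|] // _.
have /tau_haus [U [V [tU tV Ux VN /disjoints_subset UV]]] : Some x <> None.
  by [].
by exists U; split=> // p Up pN; apply: (UV _ Up); rewrite pN.
Qed.

Lemma pointed_ext_setD1 U : subspace_top X (Some @^-1` U) -> tau (U `\ None).
Proof.
case: tau_ext => tau_top _ _ sub /sub [U' [tU' UU']].
suff -> : U `\ None = U' `&` [set p | p <> None].
  by apply: topI pointed_ext_Some.
have inU x : U (Some x) <-> U' (Some x).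
  by rewrite -[U _]/((Some @^-1` U) x) UU'.
apply/seteqP; split=> -[x|] [Ux nx] //=.
- by split=> //; apply/inU.
- by exfalso; apply: nx.
- by split=> //; apply/inU.
Qed.

End PointedExtension.

Section Negation.
Context {T : topologicalType} {X A B : set T}.
Hypotheses (defX : X = ~` (A `|` B)) (cT : compact [set: T])
  (hT : hausdorff_space T) (clA : closed A) (clB : closed B)
  (AB : A `&` B = set0).

Local Notation q := (to_pointed X).
Local Notation XA := (collapse_top X A B).
Local Notation XB := (collapse_top X B A).

Let defX' : X = ~` (B `|` A). Proof. by rewrite setUC. Qed.
Let A_notB : A `<=` ~` B. Proof. exact/disjoints_subset. Qed.
Let B_notA : B `<=` ~` A. Proof. by apply/disjoints_subset; rewrite setIC. Qed.

Let Xpt_notAB (x : pts X) : ~ A (sval x) /\ ~ B (sval x).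
Proof. by case: x => y /=; rewrite {1}defX setCU. Qed.

Lemma fiber_prod_collapse : fiber_prod_top XA XB = plus_top X.
Proof.
apply/seteqP; split=> S.
  apply: kify_subspace cT hT (openX defX clA clB) _ S.
  by apply: diag_top_subspace; apply: collapse_subspace.
move=> [V [oV SV]]; apply/sub_kify/diag_topP => -[x|] Sp.
  have Vx : V (sval x) by rewrite -[V _]/((sval @^-1` V) x) -SV.
  exists (some_set X V), (some_set X V).
  split=> //; try exact: collapse_some_set.
  by move=> [z|] [] //= Vz _; rewrite -[S _]/((Some @^-1` S) z) SV.
have [U [W [oU oW AU BW UW]]] := separate_compacts open_is_topology
  (hausdorff_open hT) (closed_compact_in_open _ cT clA)
  (closed_compact_in_open _ cT clB) AB.
exists (base_set X U), (base_set X W); split=> //; try exact: collapse_base_set.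
have /disjoints_subset UW' := some_set_disjoint (X := X) UW.
by move=> [z|] [] //= Uz Wz; exfalso; exact: (UW' (Some z)).
Qed.

Let notX y : A y \/ B y -> ~ X y.
Proof. by rewrite defX => ABy /(_ ABy). Qed.

Section Maximality.
Variable tau : set (set (option (pts X))).
Hypothesis tau_ext : pointed_ext X tau.

(* The points where P and P' could differ form a compact subset of X, which
   tau separates from the base point. *)
Lemma collapse_agrees_off {V P} : open V -> B `<=` V -> XA P ->
  exists P', tau P' /\ forall p, (~` some_set X V) p -> (P p <-> P' p).
Proof.
move=> oV BV XAP; have [tau_top tau_haus _ _] := tau_ext.
have [PN|nPN] := pselect (P None); last first.
  exists P; split; last by move=> p _; split.
  rewrite -(not_setD1 nPN).
  by apply: (pointed_ext_setD1 tau_ext); exact: (collapse_subspace defX).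
have [VP [oVP VPP]] := (collapse_topP defX P).1 XAP.
have AVP : A `<=` VP.
  move=> y Ay; apply/(VPP y (A_notB _ Ay)).
  by rewrite to_pointed_notin //; apply: notX; left.
pose Z := ~` V `&` ~` VP.
have ZX : Z `<=` X by move=> y [nVy nVPy]; rewrite defX => -[/AVP|/BV].
have cZ : compact_in tau (q @` Z).
  apply: compact_in_to_pointed (pointed_ext_subspace tau_ext) ZX _.
  by apply: closed_compact_in_open cT _; apply: closedI; exact: open_closedC.
have nZN : ~ (q @` Z) None.
  by move=> [y /ZX Xy]; rewrite -[y]/(sval (exist _ y Xy)) to_pointed_val.
have [W1 [W2 [tW1 tW2 W1N ZW2 /disjoints_subset W12]]] :=
  separate_point_compact tau_top tau_haus cZ nZN.
exists (W1 `|` (P `\ None)); split.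
  apply: (topU tau_top) => //; apply: (pointed_ext_setD1 tau_ext).
  exact: (collapse_subspace defX).
move=> [x|] /= nVx; last by split=> // _; left.
split=> [Px|[W1x|[]//]]; first by right.
apply: contrapT => nPx; apply: (W12 _ W1x); apply: ZW2.
exists (sval x); last exact: to_pointed_val.
split=> // VPx; apply: nPx; rewrite -(to_pointed_val x); apply/VPP => //.
exact: (Xpt_notAB x).2.
Qed.

Lemma compact_in_diag {V K} : open V -> B `<=` V -> compact_in tau K ->
  K `<=` ~` some_set X V -> compact_in (diag_top XA tau) K.
Proof.
move=> oV BV cK KV; have [tau_top _ _ _] := tau_ext.
apply: compact_in_trace_coarser cK _ => S p /diag_topP DS Sp Kp.
have [P [Q [XAP tQ Pp Qp PQS]]] := DS p Sp.
have [P' [tP' PP']] := collapse_agrees_off oV BV XAP.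
exists (P' `&` Q); split; [exact: topI|by split=> //; apply/PP'; [exact: KV|]|].
by move=> z [[P'z Qz] Kz]; apply: PQS; split=> //; apply/(PP' z (KV z Kz)).
Qed.

Hypothesis tau_fiber : fiber_prod_top XA tau = plus_top X.

Lemma base_isolated_off {V K} : open V -> B `<=` V -> compact_in tau K ->
  K `<=` ~` some_set X V -> K None ->
  exists W, [/\ tau W, W None & W `&` K `<=` [set None]].
Proof.
move=> oV BV cK KV KN; have [tau_top _ _ _] := tau_ext.
have : kify (diag_top XA tau) [set None].
  rewrite -fiber_prod_topE tau_fiber; exists set0; split; first exact: open0.
  by apply/seteqP; split.
move=> /(_ K (compact_in_diag oV BV cK KV)) [S [DS NS]].
have SN : S None by have [] : (S `&` K) None by rewrite -NS.
have [P [Q [XAP tQ PN QN PQS]]] := (diag_topP _ _ _).1 DS None SN.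
have [P' [tP' PP']] := collapse_agrees_off oV BV XAP.
exists (P' `&` Q); split; [exact: topI|by split=> //; apply/(PP' None)|].
move=> p [[P'p Qp] Kp]; have [] : ([set None] `&` K) p.
  rewrite NS; split=> //; apply: PQS.
  by split=> //; apply/(PP' p (KV _ Kp)).
by [].
Qed.

Lemma collapse_trace_kify U K : XB U -> U None -> compact_in tau K ->
  exists W, tau W /\ U `&` K = W `&` K.
Proof.
move=> XBU UN cK; have [tau_top _ _ _] := tau_ext.
have [V [oV VU]] := (collapse_topP defX' U).1 XBU.
have BV : B `<=` V.
  move=> y By; apply/(VU y (B_notA _ By)).
  by rewrite to_pointed_notin //; apply: notX; right.
pose U' := U `\ None.
have tU' : tau U'.
  by apply: (pointed_ext_setD1 tau_ext); exact: (collapse_subspace defX').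
pose K' := (K `\` U') `|` [set None].
have K'V : K' `<=` ~` some_set X V.
  rewrite /K' subUset; split; last by move=> _ -> [].
  move=> [x [_ nU'x] /= Vx|_ []//]; apply: nU'x; split=> //.
  by rewrite -(to_pointed_val x); apply/VU => //; exact: (Xpt_notAB x).1.
have cK' : compact_in tau K'.
  by apply: compact_inU; [exact: compact_inD|exact: compact_in_set1].
have [W [tW WN WK']] := base_isolated_off oV BV cK' K'V (or_intror erefl).
exists (W `|` U'); split; first exact: topU.
apply/seteqP; split=> [p [Up Kp]|p [[Wp|[Up _]] Kp]]; split=> //.
- by case: p Up Kp => [x|] Up Kp; [right|left].
- have [//|nUp] := pselect (U p).
  have -> // : p = None.
  by apply: WK'; split=> //; left; split=> // -[].
Qed.

Lemma collapse_maximal : pext_le tau XB.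
Proof.
move=> U XBU; have [_ _ tau_cg _] := tau_ext.
have [UN|nUN] := pselect (U None).
  by apply: tau_cg => K cK; exact: collapse_trace_kify.
rewrite -(not_setD1 nUN); apply: (pointed_ext_setD1 tau_ext).
exact: (collapse_subspace defX').
Qed.

End Maximality.

Lemma collapse_negation : is_negation X XA XB.
Proof.
split.
- by apply: (collapse_pointed_ext defX' cT hT clB clA); rewrite setIC.
- exact: fiber_prod_collapse.
- by move=> tau tau_ext; exact: collapse_maximal.
Qed.

End Negation.

Theorem mainTheorem13 (T : topologicalType) (dL dR : set T) :
  compact [set: T] -> hausdorff_space T ->
  closed dL -> closed dR -> dL `&` dR = set0 ->
  let X := ~` (dL `|` dR) in
  let XL := collapse_top X dL dR in
  let XR := collapse_top X dR dL in
  [/\ well_pointed X XL, well_pointed X XR,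
      is_negation X XL XR & is_negation X XR XL].
Proof.
move=> cT hT clL clR LR X XL XR.
have negLR : is_negation X XL XR by exact: collapse_negation.
have negRL : is_negation X XR XL.
  by apply: collapse_negation => //; [rewrite /X setUC|rewrite setIC].
by split=> //; [exists XR, XL|exists XL, XR].
Qed.
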